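(* For every commutative ring $A$ there exists a ring extension $A\subseteq B$ such that the canonical map $\mathfrak{C}(A,B)\to\operatorname{Pic}(A)$, sending the class of an invertible ideal $L$ to $[L]$, is an isomorphism of groups.
   Context: For an extension of rings $A\subseteq B$ and $A$-submodules $L,L'$ of $B$, $LL'$ is the $A$-submodule of finite sums $\sum x_ky_k$. An $A$-submodule $L$ of $B$ is an invertible ideal of $A\subseteq B$ if $LL'=A$ for some $A$-submodule $L'$ of $B$; these form an abelian group $\mathscr{G}(A,B)$ under multiplication and $\mathfrak{C}(A,B)=\mathscr{G}(A,B)/\{Ax:x\in B^\ast\}$. Invertible ideals are finitely generated projective $A$-modules of rank one, so $L\mapsto[L]$ gives a map to $\operatorname{Pic}(A)$, the group of isomorphism classes of finitely generated projective $A$-modules of constant rank $1$ under $\otimes_A$. *)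

From HB Require Import structures.
From mathcomp Require Import all_boot all_order all_algebra.
Set Implicit Arguments. Unset Strict Implicit. Unset Printing Implicit Defensive.
Import GRing.Theory.
Local Open Scope ring_scope.

Section Defs.
Variables (A B : comPzRingType) (i : {rmorphism A -> B}).

Definition is_submod (L : B -> Prop) : Prop :=
  [/\ L 0, (forall x y, L x -> L y -> L (x + y))
    & (forall a x, L x -> L (i a * x))].

Definition prodm (L L' : B -> Prop) : B -> Prop := fun z =>
  exists n (u v : 'I_n -> B),
    (forall k, L (u k) /\ L' (v k)) /\ z = \sum_(k < n) u k * v k.

Definition imA : B -> Prop := fun z => exists a, z = i a.

Definition invertible_ideal (L : B -> Prop) : Prop :=
  is_submod L /\ exists L', is_submod L' /\ forall z, prodm L L' z <-> imA z.

Definition principal (x : B) : B -> Prop := fun z => exists a, z = i a * x.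

Definition iso_to_sub (M : lmodType A) (L : B -> Prop) : Prop :=
  exists phi : M -> B,
    [/\ (forall x y, phi (x + y) = phi x + phi y),
        (forall a x, phi (a *: x) = i a * phi x),
        injective phi
      & (forall z, L z <-> exists x, z = phi x)].

(* the A-submodule LL' of B, with multiplication L x L' -> LL', is a tensor
   product L ⊗_A L' (universal property); i.e. [L][L'] = [LL'] in Pic A *)
Definition mult_is_tensor (L L' : B -> Prop) : Prop :=
  forall (N : lmodType A) (c : B -> B -> N),
    (forall x x' y, L x -> L x' -> L' y -> c (x + x') y = c x y + c x' y) ->
    (forall x y y', L x -> L' y -> L' y' -> c x (y + y') = c x y + c x y') ->
    (forall a x y, L x -> L' y -> c (i a * x) y = a *: c x y) ->
    (forall a x y, L x -> L' y -> c x (i a * y) = a *: c x y) ->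
    let lin g := (forall z z', prodm L L' z -> prodm L L' z' ->
                    g (z + z') = g z + g z') /\
                 (forall a z, prodm L L' z -> g (i a * z) = a *: g z) /\
                 (forall x y, L x -> L' y -> g (x * y) = c x y) in
    exists g : B -> N, lin g /\
      forall g' : B -> N, lin g' -> forall z, prodm L L' z -> g' z = g z.

End Defs.

Section Pic.
Variable A : comPzRingType.

Definition is_prime_ideal (P : A -> Prop) : Prop :=
  [/\ P 0, (forall x y, P x -> P y -> P (x + y)),
      (forall a x, P x -> P (a * x)), ~ P 1
    & (forall a b, P (a * b) -> P a \/ P b)].

(* finitely generated projective: direct summand of a free module A^n *)
Definition fg_projective (M : lmodType A) : Prop :=
  exists n (p : 'rV[A]_n -> M) (s : M -> 'rV[A]_n),
    [/\ (forall a x y, p (a *: x + y) = a *: p x + p y),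
        (forall a x y, s (a *: x + y) = a *: s x + s y)
      & (forall m, p (s m) = m)].

(* M_P is free of rank one over A_P (localizations written out):
   some m/1 generates M_P and has annihilator 0 in A_P *)
Definition loc_free_rank1 (M : lmodType A) (P : A -> Prop) : Prop :=
  exists m : M,
    (forall x : M, exists s a, ~ P s /\ s *: x = a *: m) /\
    (forall a, (exists u, ~ P u /\ (u * a) *: m = 0) ->
               exists v, ~ P v /\ v * a = 0).

Definition const_rank1 (M : lmodType A) : Prop :=
  forall P, is_prime_ideal P -> loc_free_rank1 M P.

Definition in_Pic (M : lmodType A) : Prop := fg_projective M /\ const_rank1 M.

End Pic.

(* Take B = ∏_P A_P, the product of the localizations of A at all its primes.
   A embeds in B since an element vanishing in every A_P is zero: a proper
   ideal lies in a prime (Zorn).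

   In any extension A ⊆ B, an invertible ideal L with L L' = A has a dual
   basis u_k ∈ L, v_k ∈ L' with Σ u_k v_k = 1.  It exhibits L as a direct
   summand of A^n, free of rank one at every prime P (where some u_k v_k is a
   unit), turns multiplication L × L' → L L' into a tensor product, and shows
   that isomorphic invertible ideals differ by a unit of B.

   Conversely, a rank-one projective M embeds into ∏_P A_P by x ↦ (a/s)_P,
   where s x = a m_P for a generator m_P of M_P.  The image is invertible, with
   inverse {w | w L ⊆ A}, because the coordinates of a projective presentation
   of M generate the unit ideal: at each P some coordinate of m_P is a unit,
   as m_P ∉ P M_P. *)

From HB Require Import structures.
From mathcomp Require Import all_boot all_order all_algebra.
From mathcomp Require Import boolp classical_sets.
From mathcomp Require Import ring.
Set Implicit Arguments. Unset Strict Implicit. Unset Printing Implicit Defensive.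
Import GRing.Theory.
Local Open Scope ring_scope.
Local Open Scope classical_set_scope.

Lemma additive_on_sum (U V : zmodType) (S : set U) (f : U -> V) n (F : 'I_n -> U) :
  S 0 -> (forall x y, S x -> S y -> S (x + y)) ->
  (forall x y, S x -> S y -> f (x + y) = f x + f y) ->
  (forall k, S (F k)) -> f (\sum_(k < n) F k) = \sum_(k < n) f (F k).
Proof.
move=> S0 SD fD SF; have f0 : f 0 = 0 by apply: (addrI (f 0)); rewrite -fD ?addr0.
suff [] : S (\sum_(k < n) F k) /\ f (\sum_(k < n) F k) = \sum_(k < n) f (F k) by [].
apply: (big_rec2 (fun x y => S x /\ f x = y)) => // k x _ _ [Sx <-].
by rewrite fD //; split; first exact: SD.
Qed.

Lemma linear_morphs (R : pzRingType) (U V : lmodType R) (f : U -> V) :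
  (forall a x y, f (a *: x + y) = a *: f x + f y) ->
  [/\ f 0 = 0, forall x y, f (x + y) = f x + f y & forall a x, f (a *: x) = a *: f x].
Proof.
move=> fL; have fD x y : f (x + y) = f x + f y by rewrite -[x]scale1r fL !scale1r.
have f0 : f 0 = 0 by apply: (addrI (f 0)); rewrite -fD !addr0.
by split=> // a x; rewrite -[a *: x]addr0 fL f0 addr0.
Qed.

Section PrimeIdeals.
Variable A : comPzRingType.

Definition is_ideal (J : set A) :=
  [/\ J 0, (forall x y, J x -> J y -> J (x + y)) & (forall a x, J x -> J (a * x))].

Definition spec := {P : set A | is_prime_ideal P}.

Lemma prime_mul_notin (P : spec) a b : ~ sval P a -> ~ sval P b -> ~ sval P (a * b).
Proof. by case: P => P [? ? ? ? pr] /= Ha Hb /pr []. Qed.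

Lemma prime_notin1 (P : spec) : ~ sval P 1.
Proof. by case: P => P []. Qed.

Lemma prime_sum_notin (P : set A) n (F : 'I_n -> A) : is_prime_ideal P ->
  ~ P (\sum_(k < n) F k) -> exists k, ~ P (F k).
Proof.
case=> P0 PD _ _ _ nPF; apply: contrapT => /forallNP nPk; apply: nPF.
by apply: (big_ind P) => // k _; apply: contrapT.
Qed.

Lemma maximal_ideal_prime (J : set A) : is_ideal J -> ~ J 1 ->
  (forall K, is_ideal K -> J `<=` K -> ~ K 1 -> K `<=` J) -> is_prime_ideal J.
Proof.
move=> [J0 JD JM] nJ1 maxJ; split=> // a b Jab.
have [Ja|nJa] := pselect (J a); [by left | right].
pose K : set A := fun z => exists j r, J j /\ z = j + r * a.
have K1 : K 1.
  apply: contrapT => nK1; apply/nJa/(maxJ K _ _ nK1); last first.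
  - by exists 0, 1; rewrite add0r mul1r.
  - by move=> z Jz; exists z, 0; rewrite mul0r addr0.
  split; first by exists 0, 0; rewrite mul0r addr0.
    move=> _ _ [j [r [Jj ->]]] [j' [r' [Jj' ->]]].
    by exists (j + j'), (r + r'); rewrite mulrDl addrACA; split; first exact: JD.
  move=> c _ [j [r [Jj ->]]]; exists (c * j), (c * r).
  by rewrite mulrDr mulrA; split; first exact: JM.
have [j [r [Jj E]]] := K1.
have -> : b = b * j + r * (a * b) by rewrite -[b in LHS]mulr1 E; ring.
by apply: JD; apply: JM.
Qed.

Definition proper_ideal_over (I J : set A) := [/\ is_ideal J, I `<=` J & ~ J 1].

Lemma chain_bigcup_proper_ideal (I : set A) (F : set (set A)) X x :
  (forall Y y, F Y -> Y y -> proper_ideal_over I Y) -> total_on F subset ->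
  F X -> X x -> proper_ideal_over I (\bigcup_(Y in F) Y).
Proof.
move=> FI Ftot FX Xx; have [[X0 _ _] IX _] := FI X x FX Xx.
split; last by move=> [Y FY Y1]; have [_ _] := FI Y 1 FY Y1; apply.
  split; first by exists X.
    move=> y z [Y FY Yy] [Z FZ Zz].
    have [[_ YD _] _ _] := FI Y y FY Yy; have [[_ ZD _] _ _] := FI Z z FZ Zz.
    have [YZ|ZY] := Ftot Y Z FY FZ.
      by exists Z => //; apply: ZD => //; exact: YZ.
    by exists Y => //; apply: YD => //; exact: ZY.
  move=> a y [Y FY Yy]; have [[_ _ YM] _ _] := FI Y y FY Yy.
  by exists Y => //; exact: YM.
by move=> y Iy; exists X => //; exact: IX.
Qed.

Lemma exists_prime_over (I : set A) : is_ideal I -> ~ I 1 ->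
  exists P : spec, I `<=` sval P.
Proof.
move=> II nI1.
(* The empty set is admitted because Zorn_bigcup also bounds the empty chain. *)
pose Ps : set (set A) := fun J => J = set0 \/ proper_ideal_over I J.
have [|J [PJ maxJ]] := @Zorn_bigcup A Ps.
  move=> F FPs Ftot.
  have [[X FX [x Xx]]|noX] := pselect (exists2 X, F X & exists x, X x).
    right; apply: chain_bigcup_proper_ideal FX Xx => // Y y FY Yy.
    by case: (FPs Y FY) => // Y0; move: Yy; rewrite Y0.
  left; apply/seteqP; split=> // x [X FX Xx].
  by apply: noX; exists X => //; exists x.
have [J0|[IJ sIJ nJ1]] := PJ.
  exfalso; apply: (maxJ I); last by right; split.
  by rewrite J0; split=> [x //|]; case: II => I0 _ _ /(_ 0 I0).
have maxJ' K : is_ideal K -> J `<=` K -> ~ K 1 -> K `<=` J.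
  move=> IK sJK nK1; apply: contrapT => nsKJ.
  by apply: (maxJ K); [split | right; split=> //; apply: subset_trans sJK].
by exists (exist _ J (maximal_ideal_prime IJ nJ1 maxJ')).
Qed.

Lemma ideal1_of_not_sub_prime (I : set A) : is_ideal I ->
  (forall P : spec, exists u, ~ sval P u /\ I u) -> I 1.
Proof.
move=> II nsubP; apply: contrapT => nI1.
have [P sIP] := exists_prime_over II nI1.
by have [u [nPu Iu]] := nsubP P; apply/nPu/sIP.
Qed.

Lemma eq0_of_locally_eq0 (M : lmodType A) (x : M) :
  (forall P : spec, exists u, ~ sval P u /\ u *: x = 0) -> x = 0.
Proof.
move=> loc0; rewrite -[x]scale1r.
apply: (@ideal1_of_not_sub_prime (fun c => c *: x = 0)) => //.
split=> [|c d cx dx|c d dx]; first exact: scale0r.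
  by rewrite scalerDl cx dx addr0.
by rewrite -scalerA dx scaler0.
Qed.

End PrimeIdeals.

(* An element of the product of the localizations A_P: at each prime P, the
   fraction fnum P / fden P with fden P outside P.  eqfracs is equality in
   every A_P. *)
Record fracs (A : comPzRingType) := Fracs {
  fnum : spec A -> A;
  fden : spec A -> A;
  fdenP : forall P : spec A, ~ sval P (fden P) }.
Arguments Fracs {A} fnum fden fdenP.

Section ProductOfLocalizations.
Variable A : comPzRingType.
Implicit Types F G H : fracs A.

Definition eqfracs F G := forall P : spec A,
  exists u, ~ sval P u /\ u * (fnum F P * fden G P - fnum G P * fden F P) = 0.

Lemma eqfracs_exact F G :
  (forall P, fnum F P * fden G P = fnum G P * fden F P) -> eqfracs F G.
Proof. by move=> E P; exists 1; rewrite E subrr mulr0; split; first exact: prime_notin1. Qed.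

Lemma eqfracs_refl F : eqfracs F F.
Proof. exact: eqfracs_exact. Qed.

Lemma eqfracs_sym F G : eqfracs F G -> eqfracs G F.
Proof.
move=> FG P; have [u [nPu Hu]] := FG P.
by exists u; rewrite -opprB mulrN Hu oppr0.
Qed.

Lemma eqfracs_trans F G H : eqfracs F G -> eqfracs G H -> eqfracs F H.
Proof.
move=> FG GH P; have [u [nPu Hu]] := FG P; have [v [nPv Hv]] := GH P.
exists (u * v * fden G P); split.
  by apply: prime_mul_notin; [exact: prime_mul_notin | exact: fdenP].
set a := fnum F P; set s := fden F P; set b := fnum G P; set t := fden G P.
set c := fnum H P; set r := fden H P.
have -> : u * v * t * (a * r - c * s) =
  v * r * (u * (a * t - b * s)) + u * s * (v * (b * r - c * t)) by ring.
by rewrite Hu Hv !mulr0 addr0.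
Qed.

Definition fadd F G := Fracs (fun P => fnum F P * fden G P + fnum G P * fden F P)
  (fun P => fden F P * fden G P) (fun P => prime_mul_notin (@fdenP _ F P) (@fdenP _ G P)).
Definition fmul F G := Fracs (fun P => fnum F P * fnum G P)
  (fun P => fden F P * fden G P) (fun P => prime_mul_notin (@fdenP _ F P) (@fdenP _ G P)).
Definition fopp F := Fracs (fun P => - fnum F P) (fden F) (@fdenP _ F).
Definition fconst (a : A) := Fracs (fun _ => a) (fun _ => 1) (@prime_notin1 A).

Lemma eqfracs_add F F' G G' :
  eqfracs F F' -> eqfracs G G' -> eqfracs (fadd F G) (fadd F' G').
Proof.
move=> FF GG P; have [u [nPu Hu]] := FF P; have [v [nPv Hv]] := GG P.
exists (u * v); split; first exact: prime_mul_notin.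
rewrite /=; set a := fnum F P; set s := fden F P; set a' := fnum F' P.
set s' := fden F' P; set b := fnum G P; set t := fden G P; set b' := fnum G' P.
set t' := fden G' P.
have -> : u * v * ((a * t + b * s) * (s' * t') - (a' * t' + b' * s') * (s * t)) =
  v * t * t' * (u * (a * s' - a' * s)) + u * s * s' * (v * (b * t' - b' * t)) by ring.
by rewrite Hu Hv !mulr0 addr0.
Qed.

Lemma eqfracs_mul F F' G G' :
  eqfracs F F' -> eqfracs G G' -> eqfracs (fmul F G) (fmul F' G').
Proof.
move=> FF GG P; have [u [nPu Hu]] := FF P; have [v [nPv Hv]] := GG P.
exists (u * v); split; first exact: prime_mul_notin.
rewrite /=; set a := fnum F P; set s := fden F P; set a' := fnum F' P.
set s' := fden F' P; set b := fnum G P; set t := fden G P; set b' := fnum G' P.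
set t' := fden G' P.
have -> : u * v * (a * b * (s' * t') - a' * b' * (s * t)) =
  v * b * t' * (u * (a * s' - a' * s)) + u * a' * s * (v * (b * t' - b' * t)) by ring.
by rewrite Hu Hv !mulr0 addr0.
Qed.

Lemma eqfracs_opp F F' : eqfracs F F' -> eqfracs (fopp F) (fopp F').
Proof.
move=> FF P; have [u [nPu Hu]] := FF P; exists u; split => //=.
by rewrite !mulNr opprK addrC -opprB mulrN Hu oppr0.
Qed.

HB.instance Definition _ := gen_eqMixin (fracs A).
HB.instance Definition _ := gen_choiceMixin (fracs A).

Definition eqfracsb : rel (fracs A) := fun F G => `[< eqfracs F G >].

Canonical eqfracs_equiv := EquivRel eqfracsb
  (fun F => asboolT (eqfracs_refl F))
  (fun F G => asbool_equiv_eq (conj (@eqfracs_sym F G) (@eqfracs_sym G F)))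
  (fun G F H FG GH => asboolT (eqfracs_trans (asboolW FG) (asboolW GH))).

Local Open Scope quotient_scope.

Definition prod_loc := {eq_quot eqfracsb}.
HB.instance Definition _ : EqQuotient _ eqfracsb prod_loc := EqQuotient.on prod_loc.
HB.instance Definition _ := Choice.on prod_loc.

Lemma eqfracsP F G : \pi_prod_loc F = \pi G <-> eqfracs F G.
Proof. by split=> [/eqmodP/asboolP|/asboolP FG]; last exact/eqmodP. Qed.

Definition to_prod_loc := lift_embed prod_loc fconst.
Canonical to_prod_loc_pi_morph := PiEmbed to_prod_loc.

Definition ploc_add := lift_op2 prod_loc fadd.
Lemma pi_ploc_add : {morph \pi : F G / fadd F G >-> ploc_add F G}.
Proof.
move=> F G; unlock ploc_add; apply/eqfracsP.
by apply: eqfracs_add; apply/eqfracsP; rewrite reprK.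
Qed.
Canonical pi_ploc_add_morph := PiMorph2 pi_ploc_add.

Definition ploc_mul := lift_op2 prod_loc fmul.
Lemma pi_ploc_mul : {morph \pi : F G / fmul F G >-> ploc_mul F G}.
Proof.
move=> F G; unlock ploc_mul; apply/eqfracsP.
by apply: eqfracs_mul; apply/eqfracsP; rewrite reprK.
Qed.
Canonical pi_ploc_mul_morph := PiMorph2 pi_ploc_mul.

Definition ploc_opp := lift_op1 prod_loc fopp.
Lemma pi_ploc_opp : {morph \pi : F / fopp F >-> ploc_opp F}.
Proof.
by move=> F; unlock ploc_opp; apply/eqfracsP/eqfracs_opp/eqfracsP; rewrite reprK.
Qed.
Canonical pi_ploc_opp_morph := PiMorph1 pi_ploc_opp.

Lemma ploc_addA : associative ploc_add.
Proof.
elim/quotW=> F; elim/quotW=> G; elim/quotW=> H; rewrite !piE.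
by apply/eqfracsP/eqfracs_exact => P /=; ring.
Qed.

Lemma ploc_addC : commutative ploc_add.
Proof.
elim/quotW=> F; elim/quotW=> G; rewrite !piE.
by apply/eqfracsP/eqfracs_exact => P /=; ring.
Qed.

Lemma ploc_add0 : left_id (to_prod_loc 0) ploc_add.
Proof.
elim/quotW=> F; rewrite !piE.
by apply/eqfracsP/eqfracs_exact => P /=; ring.
Qed.

Lemma ploc_addN : left_inverse (to_prod_loc 0) ploc_opp ploc_add.
Proof.
elim/quotW=> F; rewrite !piE.
by apply/eqfracsP/eqfracs_exact => P /=; ring.
Qed.

HB.instance Definition _ :=
  GRing.isZmodule.Build prod_loc ploc_addA ploc_addC ploc_add0 ploc_addN.

Lemma ploc_mulA : associative ploc_mul.
Proof.
elim/quotW=> F; elim/quotW=> G; elim/quotW=> H; rewrite !piE.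
by apply/eqfracsP/eqfracs_exact => P /=; ring.
Qed.

Lemma ploc_mulC : commutative ploc_mul.
Proof.
elim/quotW=> F; elim/quotW=> G; rewrite !piE.
by apply/eqfracsP/eqfracs_exact => P /=; ring.
Qed.

Lemma ploc_mul1 : left_id (to_prod_loc 1) ploc_mul.
Proof.
elim/quotW=> F; rewrite !piE.
by apply/eqfracsP/eqfracs_exact => P /=; ring.
Qed.

Lemma ploc_mulDl : left_distributive ploc_mul ploc_add.
Proof.
elim/quotW=> F; elim/quotW=> G; elim/quotW=> H; rewrite !piE.
by apply/eqfracsP/eqfracs_exact => P /=; ring.
Qed.

HB.instance Definition _ :=
  GRing.Zmodule_isComPzRing.Build prod_loc ploc_mulA ploc_mulC ploc_mul1 ploc_mulDl.

Lemma to_prod_loc_is_zmod_morphism : zmod_morphism to_prod_loc.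
Proof. by move=> a b; rewrite !piE; apply/eqfracsP/eqfracs_exact => P /=; ring. Qed.

Lemma to_prod_loc_is_monoid_morphism : monoid_morphism to_prod_loc.
Proof. by split=> // a b; rewrite !piE; apply/eqfracsP/eqfracs_exact => P /=; ring. Qed.

HB.instance Definition _ :=
  GRing.isZmodMorphism.Build A prod_loc to_prod_loc to_prod_loc_is_zmod_morphism.
HB.instance Definition _ :=
  GRing.isMonoidMorphism.Build A prod_loc to_prod_loc to_prod_loc_is_monoid_morphism.

Lemma to_prod_loc_inj : injective to_prod_loc.
Proof.
move=> a b; rewrite !piE => /eqfracsP ab; apply/eqP; rewrite -subr_eq0; apply/eqP.
apply: (@eq0_of_locally_eq0 _ A^o) => P; have [u [nPu Hu]] := ab P.
by exists u; move: Hu; rewrite /= !mulr1.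
Qed.

End ProductOfLocalizations.

Section InjectiveExtension.
Variables (A B : comPzRingType) (i : {rmorphism A -> B}).
Hypothesis i_inj : injective i.

Definition pre (z : B) : A :=
  if pselect (imA i z) is left h then projT1 (cid h) else 0.

Lemma preK z : imA i z -> i (pre z) = z.
Proof. by rewrite /pre; case: pselect => // h _; case: cid. Qed.

Lemma imA_rmorph a : imA i (i a). Proof. by exists a. Qed.

Lemma pre_rmorph a : pre (i a) = a.
Proof. by apply: i_inj; rewrite preK //; exact: imA_rmorph. Qed.

Lemma imAD z w : imA i z -> imA i w -> imA i (z + w).
Proof. by move=> [a ->] [b ->]; exists (a + b); rewrite rmorphD. Qed.

Lemma imAM z w : imA i z -> imA i w -> imA i (z * w).
Proof. by move=> [a ->] [b ->]; exists (a * b); rewrite rmorphM. Qed.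

Lemma preD z w : imA i z -> imA i w -> pre (z + w) = pre z + pre w.
Proof. by move=> [a ->] [b ->]; rewrite -rmorphD !pre_rmorph. Qed.

Lemma preM z w : imA i z -> imA i w -> pre (z * w) = pre z * pre w.
Proof. by move=> [a ->] [b ->]; rewrite -rmorphM !pre_rmorph. Qed.

Lemma preZ a z : imA i z -> pre (i a * z) = a * pre z.
Proof. by move=> Az; rewrite preM ?pre_rmorph //; exact: imA_rmorph. Qed.

Lemma prodm_mul (L L' : set B) x y : L x -> L' y -> prodm L L' (x * y).
Proof. by move=> Lx L'y; exists 1%N, (fun _ => x), (fun _ => y); rewrite big_ord1. Qed.

Lemma prodm0 (L L' : set B) : prodm L L' 0.
Proof. by exists 0%N, (fun _ => 0), (fun _ => 0); rewrite big_ord0; split=> // -[]. Qed.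

Lemma prodmD (L L' : set B) z w : prodm L L' z -> prodm L L' w -> prodm L L' (z + w).
Proof.
move=> [n [u [v [Luv ->]]]] [m [u' [v' [Luv' ->]]]].
pose glue (f : 'I_n -> B) (f' : 'I_m -> B) k :=
  match split k with inl j => f j | inr j => f' j end.
exists (n + m)%N, (glue u u'), (glue v v'); split.
  by move=> k; rewrite /glue; case: (split k).
rewrite big_split_ord; congr (_ + _); apply: eq_bigr => k _; rewrite /glue.
  by rewrite (unsplitK (inl _ k) : split (lshift m k) = inl k).
by rewrite (unsplitK (inr _ k) : split (rshift n k) = inr k).
Qed.

Definition ilinear (M : lmodType A) (f : M -> B) :=
  (forall x y, f (x + y) = f x + f y) /\ (forall a x, f (a *: x) = i a * f x).

Section SubmoduleAsModule.
Variables (L : set B) (HL : is_submod i L).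

Definition sub_lmod of is_submod i L := {x : B | L x}.
Local Notation M := (sub_lmod HL).

HB.instance Definition _ := gen_eqMixin M.
HB.instance Definition _ := gen_choiceMixin M.

Let L0 : L 0. Proof. by case: HL. Qed.
Let LD x y : L x -> L y -> L (x + y). Proof. by case: HL => _ + _; apply. Qed.
Let LZ a x : L x -> L (i a * x). Proof. by case: HL => _ _; apply. Qed.
Let LN x : L x -> L (- x). Proof. by rewrite -mulN1r -(rmorphN1 i); exact: LZ. Qed.

Definition sub_zero : M := exist _ 0 L0.
Definition sub_add (x y : M) : M := exist _ _ (LD (svalP x) (svalP y)).
Definition sub_opp (x : M) : M := exist _ _ (LN (svalP x)).
Definition sub_scale a (x : M) : M := exist _ _ (LZ a (svalP x)).

Lemma sval_inj : injective (@sval B L).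
Proof. by move=> [x Lx] [y Ly] /= xy; apply: eq_exist. Qed.

Lemma sub_addA : associative sub_add.
Proof. by move=> x y z; apply: sval_inj; rewrite /= addrA. Qed.
Lemma sub_addC : commutative sub_add.
Proof. by move=> x y; apply: sval_inj; rewrite /= addrC. Qed.
Lemma sub_add0 : left_id sub_zero sub_add.
Proof. by move=> x; apply: sval_inj; rewrite /= add0r. Qed.
Lemma sub_addN : left_inverse sub_zero sub_opp sub_add.
Proof. by move=> x; apply: sval_inj; rewrite /= addNr. Qed.

HB.instance Definition _ := GRing.isZmodule.Build M sub_addA sub_addC sub_add0 sub_addN.

Lemma sub_scaleA a b x : sub_scale a (sub_scale b x) = sub_scale (a * b) x.
Proof. by apply: sval_inj; rewrite /= rmorphM mulrA. Qed.
Lemma sub_scale1 : left_id 1 sub_scale.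
Proof. by move=> x; apply: sval_inj; rewrite /= rmorph1 mul1r. Qed.
Lemma sub_scaleDr : right_distributive sub_scale +%R.
Proof. by move=> a x y; apply: sval_inj; rewrite /= mulrDr. Qed.
Lemma sub_scaleDl x : {morph sub_scale^~ x : a b / a + b}.
Proof. by move=> a b; apply: sval_inj; rewrite /= rmorphD mulrDl. Qed.

HB.instance Definition _ := GRing.Zmodule_isLmodule.Build A M
  sub_scaleA sub_scale1 sub_scaleDr sub_scaleDl.

Lemma sval_sum n (F : 'I_n -> M) :
  sval (\sum_(k < n) F k) = \sum_(k < n) sval (F k).
Proof. exact: (big_morph (@sval B L)). Qed.

Lemma sub_lmod_iso : iso_to_sub i M L.
Proof.
exists (@sval B L); split=> //; first exact: sval_inj.
by move=> z; split=> [Lz|[x ->]]; [exists (exist _ z Lz) | exact: svalP].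
Qed.

End SubmoduleAsModule.

Definition dual_basis (L : set B) n (u v : 'I_n -> B) :=
  [/\ forall k, L (u k), forall k x, L x -> imA i (x * v k)
    & \sum_(k < n) u k * v k = 1].

Lemma invertible_dual_basis L : invertible_ideal i L ->
  exists n (u v : 'I_n -> B), dual_basis L u v.
Proof.
move=> [_ [L' [_ LL'E]]].
have [n [u [v [Luv sum1]]]] : prodm L L' 1 by apply/LL'E; exists 1; rewrite rmorph1.
exists n, u, v; split=> [k|k x Lx|]; first by case: (Luv k).
  by apply/LL'E/prodm_mul; last by case: (Luv k).
by rewrite sum1.
Qed.

Section DualBasis.
Variables (L : set B) (n : nat) (u v : 'I_n -> B).
Hypothesis uv : dual_basis L u v.

Lemma dual_basis_expand x : L x -> x = \sum_(k < n) i (pre (x * v k)) * u k.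
Proof.
case: uv => _ Lv sum1 Lx; rewrite -[LHS]mulr1 -sum1 mulr_sumr.
apply: eq_bigr => k _; rewrite preK; last exact: Lv.
by rewrite mulrA mulrAC.
Qed.

Lemma dual_basis_pre_sum : \sum_(k < n) pre (u k * v k) = 1.
Proof.
case: uv => Lu Lv sum1; apply: i_inj; rewrite rmorph_sum rmorph1 -sum1.
by apply: eq_bigr => k _; rewrite preK //; exact: Lv.
Qed.

Variable HL : is_submod i L.

Lemma sub_lmod_fg_projective : fg_projective (sub_lmod HL).
Proof.
case: uv => Lu Lv _; pose e k : sub_lmod HL := exist _ (u k) (Lu k).
have Lvx (x : sub_lmod HL) k : imA i (sval x * v k) by apply: Lv; exact: svalP.
exists n, (fun r => \sum_(k < n) r 0 k *: e k), (fun x => \row_k pre (sval x * v k)).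
split=> [a r r'|a x y|x].
- rewrite scaler_sumr -big_split; apply: eq_bigr => k _.
  by rewrite !mxE scalerDl scalerA.
- apply/rowP => k; rewrite !mxE /= mulrDl -mulrA preD ?preZ //.
  by apply: imAM => //; exact: imA_rmorph.
- apply: sval_inj; rewrite sval_sum [RHS](dual_basis_expand (svalP x)).
  by apply: eq_bigr => k _; rewrite mxE.
Qed.

Lemma sub_lmod_const_rank1 : const_rank1 (sub_lmod HL).
Proof.
move=> P primeP; case: uv => Lu Lv _.
have [k nPk] : exists k, ~ P (pre (u k * v k)).
  by apply: prime_sum_notin => //; rewrite dual_basis_pre_sum; case: primeP.
have preKv y : L y -> i (pre (y * v k)) = y * v k.
  by move=> Ly; rewrite preK //; exact: Lv.
exists (exist _ (u k) (Lu k)); split=> [x|a [w [nPw wa0]]].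
  exists (pre (u k * v k)), (pre (sval x * v k)); split=> //; apply: sval_inj.
  by rewrite /= (preKv _ (Lu k)) (preKv _ (svalP x)) mulrC mulrA mulrAC.
exists (w * pre (u k * v k)); split; first by case: primeP => _ _ _ _ pr /pr [].
apply: i_inj; rewrite rmorph0 !rmorphM (preKv _ (Lu k)).
have := congr1 (fun x => sval x * v k) wa0; rewrite /= mul0r rmorphM => <-.
by rewrite mulrAC !mulrA.
Qed.

End DualBasis.

Lemma invertible_in_Pic L : invertible_ideal i L ->
  exists M : lmodType A, in_Pic M /\ iso_to_sub i M L.
Proof.
move=> invL; have HL : is_submod i L by case: invL.
have [n [u [v uv]]] := invertible_dual_basis invL.
exists (sub_lmod HL); split; last exact: sub_lmod_iso.
by split; [exact: sub_lmod_fg_projective uv HL | exact: sub_lmod_const_rank1 uv HL].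
Qed.

Lemma ilinear_sum (M : lmodType A) (f : M -> B) n (F : 'I_n -> M) :
  ilinear f -> f (\sum_(k < n) F k) = \sum_(k < n) f (F k).
Proof.
move=> [fD _]; have f0 : f 0 = 0 by apply: (addrI (f 0)); rewrite -fD !addr0.
exact: big_morph.
Qed.

Lemma imA_submod : is_submod i (imA i).
Proof.
split=> [|z w|a z Az]; [by exists 0; rewrite rmorph0 | exact: imAD |].
exact: imAM (imA_rmorph a) Az.
Qed.

Lemma submod_mulr (N : set B) w :
  is_submod i N -> is_submod i (fun z => N (z * w)).
Proof.
case=> N0 ND NZ; split=> [|z z' Nz Nz'|a z Nz]; first by rewrite mul0r.
  by rewrite mulrDl; exact: ND.
by rewrite -mulrA; exact: NZ.
Qed.

Lemma prodm_sub (L L' N : set B) z : is_submod i N ->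
  (forall x y, L x -> L' y -> N (x * y)) -> prodm L L' z -> N z.
Proof.
case=> N0 ND _ LL'N [n [u [v [Luv ->]]]].
by apply: big_ind => // k _; case: (Luv k) => Lu Lv; exact: LL'N.
Qed.

Lemma invertible_mul_id_eq1 L e : invertible_ideal i L ->
  (forall x, L x -> x * e = x) -> e = 1.
Proof.
move=> invL xe; have [n [u [v [Lu _ sum1]]]] := invertible_dual_basis invL.
rewrite -[e]mul1r -sum1 mulr_suml; apply: eq_bigr => k _.
by rewrite mulrAC xe.
Qed.

Lemma invertible_iso_multiplier (M : lmodType A) L (phi psi : M -> B) :
  invertible_ideal i L -> ilinear phi -> injective phi ->
  (forall z, L z <-> exists x, z = phi x) -> ilinear psi ->
  exists c, forall x, psi x = phi x * c.
Proof.
move=> invL phiL phi_inj Lphi psiL; have [_ phiZ] := phiL; have [_ psiZ] := psiL.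
have [n [u [v uv]]] := invertible_dual_basis invL; have [Lu Lv _] := uv.
have [m mE] := choice (fun k => (Lphi (u k)).1 (Lu k)).
have Lphix x : L (phi x) by apply/Lphi; exists x.
have xE x : x = \sum_(k < n) pre (phi x * v k) *: m k.
  apply: phi_inj; rewrite ilinear_sum // [LHS](dual_basis_expand uv (Lphix x)).
  by apply: eq_bigr => k _; rewrite phiZ -mE.
exists (\sum_(k < n) psi (m k) * v k) => x.
rewrite {1}(xE x) ilinear_sum // mulr_sumr; apply: eq_bigr => k _.
by rewrite psiZ preK; [rewrite -mulrA (mulrC (v k)) | exact: Lv].
Qed.

Lemma invertible_iso_principal L L' :
  invertible_ideal i L -> invertible_ideal i L' ->
  (exists M : lmodType A, iso_to_sub i M L /\ iso_to_sub i M L') ->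
  exists x : B, (exists y : B, x * y = 1) /\
    forall z, L' z <-> prodm L (principal i x) z.
Proof.
move=> invL invL' [M [[phi [phiD phiZ phi_inj Lphi]] [psi [psiD psiZ psi_inj Lpsi]]]].
have phiL : ilinear phi by []; have psiL : ilinear psi by [].
have [c psiE] := invertible_iso_multiplier invL phiL phi_inj Lphi psiL.
have [d phiE] := invertible_iso_multiplier invL' psiL psi_inj Lpsi phiL.
exists c; split.
  exists d; apply: (invertible_mul_id_eq1 invL) => _ /Lphi [x ->].
  by rewrite mulrA -psiE -phiE.
move=> z; split=> [/Lpsi [x ->]|].
  rewrite psiE; apply: prodm_mul; first by apply/Lphi; exists x.
  by exists 1; rewrite rmorph1 mul1r.
apply: prodm_sub; first by case: invL'.
move=> _ _ /Lphi [x ->] [a ->]; apply/Lpsi; exists (a *: x).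
by rewrite psiZ psiE mulrCA mulrA.
Qed.

Section TensorProduct.
Variables (L L' : set B) (HL : is_submod i L) (HL' : is_submod i L').
Variables (N : lmodType A) (c : B -> B -> N).
Hypothesis cDl : forall x x' y, L x -> L x' -> L' y -> c (x + x') y = c x y + c x' y.
Hypothesis cDr : forall x y y', L x -> L' y -> L' y' -> c x (y + y') = c x y + c x y'.
Hypothesis cZl : forall a x y, L x -> L' y -> c (i a * x) y = a *: c x y.
Hypothesis cZr : forall a x y, L x -> L' y -> c x (i a * y) = a *: c x y.

Definition tensor_lin (g : B -> N) :=
  (forall z z', prodm L L' z -> prodm L L' z' -> g (z + z') = g z + g z') /\
  (forall a z, prodm L L' z -> g (i a * z) = a *: g z) /\
  (forall x y, L x -> L' y -> g (x * y) = c x y).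

Lemma tensor_lin_sum g m (x y : 'I_m -> B) : tensor_lin g ->
  (forall k, L (x k) /\ L' (y k)) ->
  g (\sum_(k < m) x k * y k) = \sum_(k < m) c (x k) (y k).
Proof.
move=> [gD [_ gc]] Lxy; rewrite (additive_on_sum (S := prodm L L')) //.
- by apply: eq_bigr => k _; have [Lx Ly] := Lxy k; rewrite gc.
- exact: prodm0.
- exact: prodmD.
- by move=> k; have [Lx Ly] := Lxy k; exact: prodm_mul.
Qed.

Lemma bilinear_suml m (x : 'I_m -> B) y : (forall k, L (x k)) -> L' y ->
  c (\sum_(k < m) x k) y = \sum_(k < m) c (x k) y.
Proof.
case: HL => L0 LD _ Lx Ly.
by apply: (additive_on_sum (S := L) (f := c^~ y)) => // x1 x2 Lx1 Lx2; exact: cDl.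
Qed.

Lemma bilinear_sumr m x (y : 'I_m -> B) : L x -> (forall k, L' (y k)) ->
  c x (\sum_(k < m) y k) = \sum_(k < m) c x (y k).
Proof.
case: HL' => L'0 L'D _ Lx Ly.
by apply: (additive_on_sum (S := L') (f := c x)) => // y1 y2 Ly1 Ly2; exact: cDr.
Qed.

Variables (n n' : nat) (u v : 'I_n -> B) (u' v' : 'I_n' -> B).
Hypotheses (uv : dual_basis L u v) (uv' : dual_basis L' u' v').

Definition tensor_map z :=
  \sum_(j < n) \sum_(k < n') pre (z * v j * v' k) *: c (u j) (u' k).

Lemma prodm_dual_imA z j k : prodm L L' z -> imA i (z * v j * v' k).
Proof.
have [_ Lv _] := uv; have [_ L'v' _] := uv'.
apply: (prodm_sub (submod_mulr (v j) (submod_mulr (v' k) imA_submod))).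
move=> x y Lx L'y; rewrite -mulrA mulrACA.
by apply: imAM; [exact: Lv | exact: L'v'].
Qed.

Lemma tensor_map_lin : tensor_lin tensor_map.
Proof.
have [Lu _ _] := uv; have [L'u' _ _] := uv'.
have [_ _ LZ] := HL; have [_ _ L'Z] := HL'.
split; [|split].
- move=> z z' Lz Lz'; rewrite /tensor_map -big_split; apply: eq_bigr => j _.
  rewrite -big_split; apply: eq_bigr => k _.
  by rewrite !mulrDl preD ?scalerDl //; exact: prodm_dual_imA.
- move=> a z Lz; rewrite /tensor_map scaler_sumr; apply: eq_bigr => j _.
  rewrite scaler_sumr; apply: eq_bigr => k _.
  by rewrite scalerA -preZ ?mulrA //; exact: prodm_dual_imA.
- move=> x y Lx L'y; rewrite [in RHS](dual_basis_expand uv Lx) bilinear_suml //;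
    last by move=> j; exact: LZ.
  apply: eq_bigr => j _; rewrite cZl // [in RHS](dual_basis_expand uv' L'y).
  rewrite bilinear_sumr //; last by move=> k; exact: L'Z.
  rewrite scaler_sumr; apply: eq_bigr => k _.
  have [_ Lv _] := uv; have [_ L'v' _] := uv'.
  rewrite cZr // scalerA -preM; [|exact: Lv|exact: L'v'].
  by congr (pre _ *: _); rewrite -mulrA mulrACA.
Qed.

End TensorProduct.

Lemma invertible_mult_is_tensor L L' :
  invertible_ideal i L -> invertible_ideal i L' -> mult_is_tensor i L L'.
Proof.
move=> invL invL' N c cDl cDr cZl cZr lin.
have [HL _] := invL; have [HL' _] := invL'.
have [n [u [v uv]]] := invertible_dual_basis invL.
have [n' [u' [v' uv']]] := invertible_dual_basis invL'.
have lin_map := tensor_map_lin HL HL' cDl cDr cZl cZr uv uv'.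
exists (tensor_map c u v u' v'); split=> // g lin_g z [m [x [y [Lxy ->]]]].
by rewrite (tensor_lin_sum lin_g Lxy) (tensor_lin_sum lin_map Lxy).
Qed.

End InjectiveExtension.

Section PicardEmbedding.
Variables (A : comPzRingType) (M : lmodType A).
Hypothesis M_rank1 : const_rank1 M.
Local Open Scope quotient_scope.
Local Notation to_prod_loc := (@to_prod_loc A).

Definition loc_gen (P : spec A) : M := projT1 (cid (M_rank1 (svalP P))).

Lemma loc_gen_spans (P : spec A) x :
  exists sa : A * A, ~ sval P sa.1 /\ sa.1 *: x = sa.2 *: loc_gen P.
Proof.
rewrite /loc_gen; case: cid => m [spans _] /=.
by have [s [a [nPs E]]] := spans x; exists (s, a).
Qed.

Lemma loc_gen_ann (P : spec A) c :
  c *: loc_gen P = 0 -> exists v, ~ sval P v /\ v * c = 0.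
Proof.
rewrite /loc_gen; case: cid => m [_ ann] /= cm0; apply: ann.
by exists 1; rewrite mul1r; split; first exact: prime_notin1.
Qed.

Definition loc_coord x (P : spec A) : A * A := projT1 (cid (loc_gen_spans P x)).

Lemma loc_coordP x P :
  ~ sval P (loc_coord x P).1 /\
  (loc_coord x P).1 *: x = (loc_coord x P).2 *: loc_gen P.
Proof. by rewrite /loc_coord; case: cid. Qed.

Definition embed_rank1_fracs x : fracs A :=
  Fracs (fun P => (loc_coord x P).2) (fun P => (loc_coord x P).1)
    (fun P => (loc_coordP x P).1).

Definition embed_rank1 x : prod_loc A := \pi_(prod_loc A) (embed_rank1_fracs x).

Lemma embed_rank1_spec x F :
  (forall P, fden F P *: x = fnum F P *: loc_gen P) -> embed_rank1 x = \pi F.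
Proof.
move=> Fx; apply/eqfracsP => P; apply: loc_gen_ann.
have [_ xE] := loc_coordP x P; move: xE; rewrite /=.
set s := (loc_coord x P).1; set a := (loc_coord x P).2 => xE.
by rewrite scalerBl (mulrC a) (mulrC _ s) -!scalerA -xE -Fx !scalerA mulrC subrr.
Qed.

Lemma embed_rank1_is_zmod_morphism : zmod_morphism embed_rank1.
Proof.
move=> x y; rewrite {2 3}/embed_rank1 !piE; apply: embed_rank1_spec => P /=.
have [_ xE] := loc_coordP x P; have [_ yE] := loc_coordP y P.
rewrite scalerBr scalerDl mulNr scaleNr; congr (_ - _).
  by rewrite mulrC -[LHS]scalerA xE scalerA mulrC.
by rewrite -[LHS]scalerA yE scalerA mulrC.
Qed.

HB.instance Definition _ := GRing.isZmodMorphism.Build M (prod_loc A) embed_rank1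
  embed_rank1_is_zmod_morphism.

Lemma embed_rank1Z c x : embed_rank1 (c *: x) = to_prod_loc c * embed_rank1 x.
Proof.
rewrite {2}/embed_rank1 !piE; apply: embed_rank1_spec => P /=.
have [_ xE] := loc_coordP x P.
by rewrite mul1r scalerA mulrC -[LHS]scalerA xE scalerA.
Qed.

Lemma embed_rank1_eq0 x : embed_rank1 x = 0 -> x = 0.
Proof.
have -> : 0 = \pi_(prod_loc A) (fconst 0) by rewrite -[0]/(to_prod_loc 0) piE.
rewrite /embed_rank1 => /eqfracsP x0; apply: eq0_of_locally_eq0 => P.
have [u [nPu]] := x0 P; have [nPs xE] := loc_coordP x P.
rewrite /= mulr1 mul0r subr0 => ua0.
exists (u * (loc_coord x P).1); split; first exact: prime_mul_notin.
by rewrite -scalerA xE scalerA ua0 scale0r.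
Qed.

Lemma embed_rank1_inj : injective embed_rank1.
Proof.
move=> x y /eqP; rewrite -subr_eq0 -raddfB => /eqP/embed_rank1_eq0/eqP.
by rewrite subr_eq0 => /eqP.
Qed.

Definition embed_rank1_image : set (prod_loc A) := fun z => exists x, z = embed_rank1 x.

Lemma embed_rank1_iso : iso_to_sub to_prod_loc M embed_rank1_image.
Proof.
exists embed_rank1; split=> //; first exact: raddfD.
  exact: embed_rank1Z.
exact: embed_rank1_inj.
Qed.

Lemma loc_gen_notin_PM (P : spec A) m (a : 'I_m -> A) (z : 'I_m -> M) :
  (forall k, sval P (a k)) -> loc_gen P <> \sum_(k < m) a k *: z k.
Proof.
move=> Pa genE; have [P0 PD PM _ Ppr] := svalP P.
pose Q v := exists t d, [/\ ~ sval P t, sval P d & t *: v = d *: loc_gen P].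
have [t [d [nPt Pd tdE]]] : Q (loc_gen P).
  rewrite [X in Q X]genE.
  apply: big_ind => [|v w [t [d [nPt Pd tvE]]] [t' [d' [nPt' Pd' twE]]]|k _].
  - by exists 1, 0; rewrite scaler0 scale0r; split=> //; exact: prime_notin1.
  - exists (t * t'), (t' * d + t * d'); split; first exact: prime_mul_notin.
      by apply: PD; apply: PM.
    by rewrite scalerDr scalerDl [t * t' in X in X *: v]mulrC -!scalerA tvE twE !scalerA.
  - have [[t b] /= [nPt tE]] := loc_gen_spans P (z k).
    exists t, (b * a k); split=> //; first exact: PM.
    by rewrite scalerA mulrC -[LHS]scalerA tE scalerA mulrC.
have [v [nPv vtd]] : exists v, ~ sval P v /\ v * (t - d) = 0.
  by apply: loc_gen_ann; rewrite scalerBl tdE subrr.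
have : sval P (v * (t - d)) by rewrite vtd.
case/Ppr => // Ptd; apply: nPt; rewrite -(subrK d t); exact: PD.
Qed.

Section Projective.
Variables (n : nat) (p : 'rV[A]_n -> M) (s : M -> 'rV[A]_n).
Hypotheses (pL : forall a x y, p (a *: x + y) = a *: p x + p y)
  (sL : forall a x y, s (a *: x + y) = a *: s x + s y) (psK : cancel s p).

Definition coord k x := s x 0 k.

Lemma coord0 k : coord k 0 = 0.
Proof. by have [s0 _ _] := linear_morphs sL; rewrite /coord s0 mxE. Qed.

Lemma coordD k x y : coord k (x + y) = coord k x + coord k y.
Proof. by have [_ sD _] := linear_morphs sL; rewrite /coord sD mxE. Qed.

Lemma coordZ k c x : coord k (c *: x) = c * coord k x.
Proof. by have [_ _ sZ] := linear_morphs sL; rewrite /coord sZ mxE. Qed.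

Lemma coord_loc_gen_notin (P : spec A) : exists k, ~ sval P (coord k (loc_gen P)).
Proof.
apply: contrapT => /forallNP nP.
apply: (@loc_gen_notin_PM P n (coord^~ (loc_gen P)) (fun k => p (delta_mx 0 k))).
  by move=> k; apply: contrapT; exact: nP.
have [p0 pD pZ] := linear_morphs pL.
rewrite -{1}[loc_gen P]psK [s _]row_sum_delta (big_morph p pD p0).
by apply: eq_bigr => k _; rewrite pZ.
Qed.

Lemma coords_sum1 : exists y : 'I_n -> M, \sum_(k < n) coord k (y k) = 1.
Proof.
pose T t := exists y : 'I_n -> M, t = \sum_(k < n) coord k (y k).
suff [y y1] : T 1 by exists y.
apply: ideal1_of_not_sub_prime; first split.
- by exists (fun _ => 0); rewrite big1 // => k _; rewrite coord0.
- move=> _ _ [y ->] [y' ->]; exists (fun k => y k + y' k).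
  by rewrite -big_split; apply: eq_bigr => k _; rewrite coordD.
- move=> c _ [y ->]; exists (fun k => c *: y k).
  by rewrite mulr_sumr; apply: eq_bigr => k _; rewrite coordZ.
move=> P; have [k nPk] := coord_loc_gen_notin P.
exists (coord k (loc_gen P)); split=> //.
exists (fun j => if j == k then loc_gen P else 0).
rewrite (bigD1 k) //= eqxx big1 ?addr0 // => j /negbTE ->; exact: coord0.
Qed.

Definition coord_fracs k : fracs A :=
  Fracs (fun P => coord k (loc_gen P)) (fun _ => 1) (@prime_notin1 A).

Lemma embed_rank1_coord x k :
  embed_rank1 x * \pi_(prod_loc A) (coord_fracs k) = to_prod_loc (coord k x).
Proof.
rewrite /embed_rank1 !piE; apply/eqfracsP/eqfracs_exact => P /=.
have [_ xE] := loc_coordP x P.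
by rewrite !mulr1 -coordZ -xE coordZ mulrC.
Qed.

Lemma embed_rank1_invertible : invertible_ideal to_prod_loc embed_rank1_image.
Proof.
split.
  split=> [|_ _ [x ->] [y ->]|a _ [x ->]]; first by exists 0; rewrite raddf0.
    by exists (x + y); rewrite raddfD.
  by exists (a *: x); rewrite embed_rank1Z.
exists (fun w => forall x, imA to_prod_loc (embed_rank1 x * w)); split.
  split=> [x|w w' Aw Aw' x|a w Aw x]; first by rewrite mulr0; exists 0; rewrite rmorph0.
    by rewrite mulrDr; exact: imAD.
  by rewrite mulrCA; apply: imAM; [exact: imA_rmorph | exact: Aw].
move=> z; split.
  by apply: prodm_sub; [exact: imA_submod | move=> _ w [x ->]; apply].
move=> [c ->]; have [y y1] := coords_sum1.
exists n, (fun k => embed_rank1 (y k)).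
exists (fun k => to_prod_loc c * \pi_(prod_loc A) (coord_fracs k)); split.
  move=> k; split; first by exists (y k).
  by move=> x; rewrite mulrCA embed_rank1_coord; apply: imAM; exact: imA_rmorph.
rewrite -[LHS]mulr1 -(rmorph1 to_prod_loc) -y1 rmorph_sum mulr_sumr.
by apply: eq_bigr => k _; rewrite mulrCA embed_rank1_coord.
Qed.

End Projective.

End PicardEmbedding.

Lemma in_Pic_embed (A : comPzRingType) (M : lmodType A) : in_Pic M ->
  exists L, invertible_ideal (@to_prod_loc A) L /\ iso_to_sub (@to_prod_loc A) M L.
Proof.
move=> [[n [p [s [pL sL psK]]]] M_rank1].
exists (embed_rank1_image M_rank1).
by split; [exact: embed_rank1_invertible pL sL psK | exact: embed_rank1_iso].
Qed.

Theorem corollary4p3 (A : comPzRingType) :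
  exists (B : comPzRingType) (i : {rmorphism A -> B}),
    injective i /\
    (* the map L |-> [L] lands in Pic(A) *)
    (forall L, invertible_ideal i L ->
       exists M : lmodType A, in_Pic M /\ iso_to_sub i M L) /\
    (* it is a group homomorphism: [LL'] = [L] [L'] *)
    (forall L L', invertible_ideal i L -> invertible_ideal i L' ->
       mult_is_tensor i L L') /\
    (* the induced map on 𝔊(A,B)/{Ax : x ∈ B^*} is injective *)
    (forall L L', invertible_ideal i L -> invertible_ideal i L' ->
       (exists M : lmodType A, iso_to_sub i M L /\ iso_to_sub i M L') ->
       exists x : B, (exists y : B, x * y = 1) /\
         forall z, L' z <-> prodm L (principal i x) z) /\
    (* and surjective *)
    (forall M : lmodType A, in_Pic M ->
       exists L, invertible_ideal i L /\ iso_to_sub i M L).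
Proof.
have inj := @to_prod_loc_inj A.
exists (prod_loc A), (@to_prod_loc A); split=> //.
split; first exact: invertible_in_Pic inj.
split; first exact: invertible_mult_is_tensor inj.
split; first exact: invertible_iso_principal.
exact: in_Pic_embed.
Qed.
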